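(* Let $F$, $X_0$, $B$, $C$ be as in the context. Suppose $\dim\ker C=1$, let $T\subset\mathbb{R}^m$ be a linear subspace of codimension 1 with $T\cap\ker C=\{0\}$, and suppose $F(X)=0$ has a nonconstant analytic family of solutions $X(t)=\sum_{p=0}^\infty X_pt^p$ with initial term $X_0$. Then $F(X)=0$ admits a $T$-standard formal solution $Y(t)=\sum_{p=0}^\infty Y_pt^p$ with $Y_0=X_0$.
   Context: Let $m,n\ge 1$ and let $F=(F_1,\dots,F_n):\mathbb{R}^m\to\mathbb{R}^n$, where each component is a polynomial of degree at most 2 written as $F_k(X)=\sum_{i=1}^m\sum_{j=1}^m\alpha^k_{ij}x_ix_j+\sum_{i=1}^m\beta^k_ix_i+\gamma^k$ for $X=(x_1,\dots,x_m)$, with real coefficients and $\alpha^k_{ij}=\alpha^k_{ji}$. Fix $X_0\in\mathbb{R}^m$ with $F(X_0)=0$. Define the bilinear map $B:\mathbb{R}^m\times\mathbb{R}^m\to\mathbb{R}^n$ by $B(X,Y)_k=\sum_{i,j=1}^m\alpha^k_{ij}x_iy_j$, the linear map $A:\mathbb{R}^m\to\mathbb{R}^n$ by $(AX)_k=\sum_{i=1}^m\beta^k_ix_i$, and the linear map $C:\mathbb{R}^m\to\mathbb{R}^n$ by $CX=B(X_0,X)+B(X,X_0)+AX$. An analytic family of solutions with initial term $X_0$ is a power series $X(t)=\sum_{p=0}^\infty X_pt^p$ with $X_p\in\mathbb{R}^m$, positive radius of convergence, constant term equal to $X_0$, and $F(X(t))=0$ for all sufficiently small $t$; it is nonconstant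 if $X_p\neq 0$ for some $p\ge 1$. Given a codimension-1 subspace $T$ with $T\cap\ker C=\{0\}$, a $T$-standard formal solution to $F(X)=0$ is a formal power series $Y(t)=\sum_{p=0}^\infty Y_pt^p$ with $Y_p\in\mathbb{R}^m$ (no convergence required) such that: (1) $CY_q=-\sum_{p=1}^{q-1}B(Y_p,Y_{q-p})$ for every $q\ge 1$; (2) $Y_1\neq 0$; (3) $Y_p\in T$ for every $p\ge 2$. *)

From HB Require Import structures.
From mathcomp Require Import all_boot all_order all_algebra.
From mathcomp Require Import all_classical all_reals all_analysis.
From mathcomp Require Import Rstruct Rstruct_topology.
Notation R := Rdefinitions.R.
Set Implicit Arguments. Unset Strict Implicit. Unset Printing Implicit Defensive.
Import Order.TTheory GRing.Theory Num.Theory.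
Local Open Scope ring_scope.

(* Vectors of R^m are row vectors 'rV[R]_m; coordinate i of X is X ord0 i.
   Coefficients: alpha k i j, beta k i, gamma k (k : 'I_n, i j : 'I_m). *)

Definition Fmap (m n : nat) (alpha : 'I_n -> 'I_m -> 'I_m -> R)
  (beta : 'I_n -> 'I_m -> R) (gamma : 'I_n -> R) (X : 'rV[R]_m) : 'rV[R]_n :=
  \row_k (\sum_(i < m) \sum_(j < m) alpha k i j * X ord0 i * X ord0 j
          + \sum_(i < m) beta k i * X ord0 i + gamma k).

Definition Bmap (m n : nat) (alpha : 'I_n -> 'I_m -> 'I_m -> R)
  (X Y : 'rV[R]_m) : 'rV[R]_n :=
  \row_k (\sum_(i < m) \sum_(j < m) alpha k i j * X ord0 i * Y ord0 j).

Definition Amap (m n : nat) (beta : 'I_n -> 'I_m -> R) (X : 'rV[R]_m)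
  : 'rV[R]_n :=
  \row_k (\sum_(i < m) beta k i * X ord0 i).

Definition Cmap (m n : nat) (alpha : 'I_n -> 'I_m -> 'I_m -> R)
  (beta : 'I_n -> 'I_m -> R) (X0 X : 'rV[R]_m) : 'rV[R]_n :=
  Bmap alpha X0 X + Bmap alpha X X0 + Amap beta X.

Definition psum (m : nat) (Xs : nat -> 'rV[R]_m) (t : R) : 'rV[R]_m :=
  \row_i limn (series (fun p => Xs p ord0 i * t ^+ p)).

Definition analytic_family (m n : nat) (alpha : 'I_n -> 'I_m -> 'I_m -> R)
  (beta : 'I_n -> 'I_m -> R) (gamma : 'I_n -> R) (X0 : 'rV[R]_m)
  (Xs : nat -> 'rV[R]_m) : Prop :=
  Xs 0%N = X0 /\
  (exists r : R, 0 < r /\ forall t : R, `|t| < r ->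
      (forall i : 'I_m, cvgn (series (fun p => Xs p ord0 i * t ^+ p))) /\
      Fmap alpha beta gamma (psum Xs t) = 0).

Definition nonconstant (m : nat) (Xs : nat -> 'rV[R]_m) : Prop :=
  exists p : nat, (1 <= p)%N /\ Xs p != 0.

Definition T_standard (m n : nat) (alpha : 'I_n -> 'I_m -> 'I_m -> R)
  (beta : 'I_n -> 'I_m -> R) (X0 : 'rV[R]_m) (T : {vspace 'rV[R]_m})
  (Ys : nat -> 'rV[R]_m) : Prop :=
  (forall q : nat, (1 <= q)%N ->
     Cmap alpha beta X0 (Ys q)
       = - \sum_(1 <= p < q) Bmap alpha (Ys p) (Ys (q - p)%N)) /\
  Ys 1%N != 0 /\
  (forall p : nat, (2 <= p)%N -> Ys p \in T).

Definition dim_ker_one (m n : nat) (C : 'rV[R]_m -> 'rV[R]_n) : Prop :=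
  exists v : 'rV[R]_m, v != 0 /\
    forall X : 'rV[R]_m, C X = 0 <-> exists c : R, X = c *: v.

(* Write [X(t) = X0 + Z(t)]; then [F(X(t)) = 0] says that
   [C Z_q + sum_(0<p<q) B(Z_p, Z_(q-p))] vanishes for every [q >= 1].  We build
   [Y] with [Y_1 = v] spanning [ker C] and [Y_q] in [T] for [q >= 2] by solving
   the degree-[q] equation for [Y_q], which is possible exactly when the
   obstruction [- sum_(0<p<q) B(Y_p, Y_(q-p))] lies in [C(T)].  Let [Z_k] be the
   first nonzero coefficient of [Z]; it is a nonzero multiple of [v].
   Substituting [zeta(t) = sum_p coord(Z_p) t^p] into the truncation [Y_(<N)]
   gives a series [W] solving the equations up to degree [N k].  As [Z - W]
   takes values in [T], where [C] is injective, [Z] and [W] agree below degree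
   [N k], and their difference in degree [N k] exhibits the degree-[N]
   obstruction, rescaled by [coord(Z_k)^N], as an element of [C(T)]. *)

From Stdlib Require Import Reals.
From Coquelicot Require PSeries Series Derive Hierarchy Lim_seq Rbar.
From HB Require Import structures.
From mathcomp Require Import all_boot all_order all_algebra.
From mathcomp Require Import all_classical all_reals all_analysis.
From mathcomp Require Import Rstruct Rstruct_topology.
From mathcomp Require Import ring.
Import Order.TTheory GRing.Theory Num.Theory.
Local Open Scope ring_scope.
Set Implicit Arguments. Unset Strict Implicit.

Notation is_pseries :=
  (@PSeries.is_pseries Hierarchy.R_AbsRing Hierarchy.R_NormedModule).

Lemma is_pseries_limn (a : nat -> R) (t : R) :
  cvgn (series (fun p => a p * t ^+ p)) ->
  is_pseries a t (limn (series (fun p => a p * t ^+ p))).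
Proof.
move=> /(@cvgr_dist_lt _ R^o) cvg_a.
apply: (@Series.is_series_ext Hierarchy.R_AbsRing Hierarchy.R_NormedModule
  (fun k => a k * t ^+ k)).
  move=> k; rewrite /Hierarchy.scal /= /Hierarchy.mult /=.
  by rewrite Hierarchy.pow_n_pow RmultE RpowE mulrC.
apply/Series.is_series_Reals => eps /RltP eps_gt0.
have [N _ HN] := cvg_a _ eps_gt0.
exists N => k /ssrnat.leP Nk; apply/RltP.
have := HN k.+1 (leqW Nk); rewrite distrC /series /= big_mkord.
by rewrite RealsE ?RminusE ?RabsE sum_f_R0E big_mkord.
Qed.

Lemma CV_radius_ge (a : nat -> R) (t l : R) : is_pseries a t l ->
  Rbar.Rbar_le (Rbar.Finite (Rabs t)) (PSeries.CV_radius a).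
Proof.
move=> at_l; apply: Rbar.Rbar_not_lt_le => lt_rad.
apply: (PSeries.CV_disk_outside a t lt_rad).
have := Series.ex_series_lim_0 _ (ex_intro _ l at_l).
apply: Lim_seq.is_lim_seq_ext => k.
by rewrite /Hierarchy.scal /= /Hierarchy.mult /= Hierarchy.pow_n_pow Rmult_comm.
Qed.

Lemma CV_radius_gt (a : nat -> R) (r : R) :
  (forall t : R, `|t| < r -> exists l, is_pseries a t l) ->
  forall t : R, `|t| < r ->
  Rbar.Rbar_lt (Rbar.Finite (Rabs t)) (PSeries.CV_radius a).
Proof.
move=> cvg_a t lt_tr.
have mid_ge0 : 0 <= (`|t| + r) / 2.
  by rewrite divr_ge0 // addr_ge0 // ltW // (le_lt_trans _ lt_tr).
have [|l at_l] := cvg_a ((`|t| + r) / 2).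
  by rewrite ger0_norm // ltr_pdivrMr // mulr2n mulrDr mulr1 ltrD2r.
apply: Rbar.Rbar_lt_le_trans (CV_radius_ge at_l).
rewrite /= !RabsE; apply/RltP.
by rewrite (ger0_norm mid_ge0) ltr_pdivlMr // mulr2n mulrDr mulr1 ltrD2l.
Qed.

(* Identity theorem: the coefficients are the Taylor coefficients at 0. *)
Lemma is_pseries_coef_eq0 (a : nat -> R) (r : R) : 0 < r ->
  (forall t : R, `|t| < r -> is_pseries a t 0) -> forall p, a p = 0.
Proof.
move=> r_gt0 a0 p.
have rad_gt0 : Rbar.Rbar_lt (Rbar.Finite 0%R) (PSeries.CV_radius a).
  have := @CV_radius_gt a r (fun t ht => ex_intro _ 0 (a0 t ht)) 0.
  by rewrite normr0 Rabs_R0; apply.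
have := PSeries.Derive_n_coef a p rad_gt0.
have -> : Derive.Derive_n (PSeries.PSeries a) p 0%R
          = Derive.Derive_n (fun _ => 0%R) p 0%R.
  apply: Derive.Derive_n_ext_loc; exists (RIneq.mkposreal r (RltP r_gt0)).
  move=> t; rewrite /Hierarchy.ball /= /Hierarchy.AbsRing_ball /Hierarchy.abs.
  rewrite /= /Hierarchy.minus /= /Hierarchy.plus /= /Hierarchy.opp /=.
  rewrite Ropp_0 Rplus_0_r RabsE => /RltP lt_tr.
  exact/PSeries.is_pseries_unique/a0.
have -> : Derive.Derive_n (fun _ => 0%R) p 0%R = 0%R.
  by case: p => [|p] //; rewrite Derive.Derive_n_const.
by move=> /esym /Rmult_integral [] // /INR_fact_neq_0.
Qed.

Lemma is_pseries_const (c t : R) :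
  is_pseries (fun q => if q == 0%N then c else 0) t c.
Proof.
apply: (@Series.is_series_ext Hierarchy.R_AbsRing Hierarchy.R_NormedModule
  (fun q => if q == 0%N then c else 0)).
  case=> [|k]; rewrite /Hierarchy.scal /= /Hierarchy.mult /=.
    by rewrite Rmult_1_l.
  by rewrite Rmult_0_r.
apply/Series.is_series_Reals => eps eps_gt0; exists 0%N => k _.
rewrite sum_f_R0E big_nat_recl // big1 // addr0.
by rewrite /Rfunctions.Rdist Rminus_diag Rabs_R0.
Qed.

Lemma is_pseries_scall (c : R) (a : nat -> R) (t l : R) : is_pseries a t l ->
  is_pseries (fun p => c * a p) t (c * l).
Proof.
exact: (@PSeries.is_pseries_scal _ Hierarchy.R_NormedModule c a t l
  (Rmult_comm _ _)).
Qed.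

Lemma is_pseries_sum (I : Type) (s : seq I) (a : I -> nat -> R) (l : I -> R)
    (t : R) : (forall i, is_pseries (a i) t (l i)) ->
  is_pseries (fun p => \sum_(i <- s) a i p) t (\sum_(i <- s) l i).
Proof.
move=> al; elim: s => [|i s IHs].
  rewrite big_nil; have := @is_pseries_const 0 t.
  by apply: PSeries.is_pseries_ext => q; rewrite big_nil; case: (q == 0%N).
rewrite big_cons; have := PSeries.is_pseries_plus _ _ _ _ _ (al i) IHs.
by apply: PSeries.is_pseries_ext => q; rewrite big_cons.
Qed.

Lemma is_pseries_mul (a b : nat -> R) (t la lb : R) :
  is_pseries a t la -> is_pseries b t lb ->
  Rbar.Rbar_lt (Rbar.Finite (Rabs t)) (PSeries.CV_radius a) ->
  Rbar.Rbar_lt (Rbar.Finite (Rabs t)) (PSeries.CV_radius b) ->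
  is_pseries (fun q => \sum_(p < q.+1) a p * b (q - p)%N) t (la * lb).
Proof.
move=> at_la bt_lb rad_a rad_b.
have := PSeries.is_pseries_mult _ _ _ _ _ at_la bt_lb rad_a rad_b.
apply: PSeries.is_pseries_ext => q; rewrite /PSeries.PS_mult sum_f_R0E big_mkord.
by apply: eq_bigr => p _; rewrite RmultE.
Qed.

Section QuadraticMaps.
Variables (m n : nat) (al : 'I_n -> 'I_m -> 'I_m -> R) (be : 'I_n -> 'I_m -> R).

Lemma BmapDl (a : R) (X Y Z : 'rV[R]_m) :
  Bmap al (a *: X + Y) Z = a *: Bmap al X Z + Bmap al Y Z.
Proof.
apply/rowP => k; rewrite !mxE mulr_sumr -big_split /=; apply: eq_bigr => i _.
rewrite mulr_sumr -big_split /=; apply: eq_bigr => j _; rewrite !mxE; ring.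
Qed.

Lemma BmapDr (a : R) (X Y Z : 'rV[R]_m) :
  Bmap al Z (a *: X + Y) = a *: Bmap al Z X + Bmap al Z Y.
Proof.
apply/rowP => k; rewrite !mxE mulr_sumr -big_split /=; apply: eq_bigr => i _.
rewrite mulr_sumr -big_split /=; apply: eq_bigr => j _; rewrite !mxE; ring.
Qed.

Lemma Bmap0l (Y : 'rV[R]_m) : Bmap al 0 Y = 0.
Proof.
apply/rowP => k; rewrite !mxE big1 // => i _.
by rewrite big1 // => j _; rewrite mxE mulr0 mul0r.
Qed.

Lemma Bmap0r (Y : 'rV[R]_m) : Bmap al Y 0 = 0.
Proof.
apply/rowP => k; rewrite !mxE big1 // => i _.
by rewrite big1 // => j _; rewrite mxE !mulr0.
Qed.

Lemma AmapD (a : R) (X Y : 'rV[R]_m) :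
  Amap be (a *: X + Y) = a *: Amap be X + Amap be Y.
Proof.
apply/rowP => k; rewrite !mxE mulr_sumr -big_split /=; apply: eq_bigr => i _.
rewrite !mxE; ring.
Qed.

Variable X0 : 'rV[R]_m.

Lemma Cmap_is_linear : linear (Cmap al be X0).
Proof.
move=> a X Y; rewrite /Cmap BmapDl BmapDr AmapD.
by apply/rowP => k; rewrite !mxE; ring.
Qed.

HB.instance Definition _ :=
  GRing.isLinear.Build R 'rV[R]_m 'rV[R]_n _ (Cmap al be X0) Cmap_is_linear.

(* [Bconv Y q] is the degree-[q] coefficient of [B(Y(t), Y(t))], without
   the terms involving [Y 0]. *)
Definition Bconv (Y : nat -> 'rV[R]_m) (q : nat) : 'rV[R]_n :=
  \sum_(1 <= p < q) Bmap al (Y p) (Y (q - p)%N).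

(* [Qcoef Y q] is the degree-[q] coefficient of [F(X0 + Y(t)) - F(X0)] when
   [Y 0 = 0]. *)
Definition Qcoef (Y : nat -> 'rV[R]_m) (q : nat) : 'rV[R]_n :=
  Cmap al be X0 (Y q) + Bconv Y q.

Lemma eq_Bconv (Y Y' : nat -> 'rV[R]_m) (q : nat) :
  (forall p, (0 < p < q)%N -> Y p = Y' p) -> Bconv Y q = Bconv Y' q.
Proof.
move=> eqY; apply: eq_big_nat => p /andP[p_gt0 lt_pq].
have lt_qp_q : (0 < q - p < q)%N.
  by rewrite subn_gt0 lt_pq ltn_subrL p_gt0 (ltn_trans p_gt0 lt_pq).
by rewrite !eqY // p_gt0.
Qed.

Lemma eq_Qcoef (Y Y' : nat -> 'rV[R]_m) (q : nat) : (0 < q)%N ->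
  (forall p, (0 < p <= q)%N -> Y p = Y' p) -> Qcoef Y q = Qcoef Y' q.
Proof.
move=> q_gt0 eqY; rewrite /Qcoef (@eq_Bconv Y Y') => [|p /andP[p_gt0 lt_pq]].
  by rewrite eqY // q_gt0 leqnn.
by rewrite eqY // p_gt0 ltnW.
Qed.

Lemma big_Bmap_cauchy (Y : nat -> 'rV[R]_m) (q : nat) : (0 < q)%N ->
  \sum_(p < q.+1) Bmap al (Y p) (Y (q - p)%N)
  = Bmap al (Y 0%N) (Y q) + Bconv Y q + Bmap al (Y q) (Y 0%N).
Proof.
move=> q_gt0.
rewrite -(big_mkord xpredT (fun p => Bmap al (Y p) (Y (q - p)%N))).
by rewrite big_ltn // big_nat_recr //= subn0 subnn addrA.
Qed.

Lemma big_Bmap_cauchy0 (Y : nat -> 'rV[R]_m) (q : nat) : Y 0%N = 0 ->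
  \sum_(p < q.+1) Bmap al (Y p) (Y (q - p)%N) = Bconv Y q.
Proof.
move=> Y0; case: q => [|q]; first by rewrite big_ord1 Y0 Bmap0l /Bconv big_geq.
by rewrite big_Bmap_cauchy // Y0 Bmap0l Bmap0r add0r addr0.
Qed.

End QuadraticMaps.

Section AnalyticFamily.
Variables (m n : nat) (al : 'I_n -> 'I_m -> 'I_m -> R) (be : 'I_n -> 'I_m -> R).
Variables (ga : 'I_n -> R) (X0 : 'rV[R]_m) (Xs : nat -> 'rV[R]_m).
Hypothesis family : analytic_family al be ga X0 Xs.

(* Expanding [F_k(X(t))] as a power series in [t] and comparing
   coefficients with the zero series. *)
Lemma analytic_family_coef (k : 'I_n) (q : nat) : (0 < q)%N ->
  \sum_(i < m) \sum_(j < m) al k i j *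
      (\sum_(p < q.+1) Xs p ord0 i * Xs (q - p)%N ord0 j)
  + \sum_(i < m) be k i * Xs q ord0 i = 0.
Proof.
case: family => _ [r [r_gt0 solves]] q_gt0.
pose a i p := Xs p ord0 i.
have a_pseries t i : `|t| < r -> is_pseries (a i) t (psum Xs t ord0 i).
  move=> lt_tr; rewrite mxE; apply: is_pseries_limn.
  by case: (solves t lt_tr) => /(_ i).
have a_radius t i : `|t| < r ->
    Rbar.Rbar_lt (Rbar.Finite (Rabs t)) (PSeries.CV_radius (a i)).
  apply: CV_radius_gt => t' lt_t'r.
  by exists (psum Xs t' ord0 i); apply: a_pseries.
pose h q := \sum_(i < m) \sum_(j < m) al k i j *
      (\sum_(p < q.+1) a i p * a j (q - p)%N)
  + \sum_(i < m) be k i * a i q + (if q == 0%N then ga k else 0).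
suff h_pseries : forall t, `|t| < r -> is_pseries h t 0.
  have := is_pseries_coef_eq0 r_gt0 h_pseries q.
  by rewrite /h; case: q q_gt0 => // q _ /=; rewrite addr0.
move=> t lt_tr; have := congr1 (fun M : 'rV[R]_n => M ord0 k) (solves t lt_tr).2.
rewrite /Fmap !mxE => <-.
apply: PSeries.is_pseries_plus; last exact: is_pseries_const.
apply: PSeries.is_pseries_plus; last first.
  by apply: is_pseries_sum => i; apply/is_pseries_scall/a_pseries.
under [X in is_pseries _ _ X]eq_bigr => i _
  do under eq_bigr => j _ do rewrite -mulrA.
apply: is_pseries_sum => i; apply: is_pseries_sum => j; apply: is_pseries_scall.
by apply: is_pseries_mul; [apply: a_pseries | apply: a_pseries
  | apply: a_radius | apply: a_radius].
Qed.

Lemma Qcoef_analytic_family (q : nat) : (0 < q)%N -> Qcoef al be X0 Xs q = 0.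
Proof.
move=> q_gt0; have coef_k k := analytic_family_coef k q_gt0.
have : \sum_(p < q.+1) Bmap al (Xs p) (Xs (q - p)%N) + Amap be (Xs q) = 0.
  apply/rowP => k; rewrite !mxE summxE -[RHS](coef_k k); congr (_ + _).
  under eq_bigr => p _ do rewrite mxE.
  rewrite exchange_big; apply: eq_bigr => i _.
  rewrite exchange_big; apply: eq_bigr => j _.
  rewrite mulr_sumr; apply: eq_bigr => p _.
  by rewrite mulrA.
rewrite big_Bmap_cauchy // family.1 /Qcoef /Cmap => <-.
by apply/rowP => k; rewrite !mxE; ring.
Qed.

End AnalyticFamily.

Definition pcoef (l : nat) (P : 'I_l -> {poly R}) (q : nat) : 'rV[R]_l :=
  \row_i (P i)`_q.

Definition compv (l : nat) (P : 'I_l -> {poly R}) (z : {poly R}) :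
  'I_l -> {poly R} := fun i => P i \Po z.

Lemma comp_poly_sum (I : Type) (r : seq I) (F : I -> {poly R}) (z : {poly R}) :
  (\sum_(i <- r) F i) \Po z = \sum_(i <- r) (F i \Po z).
Proof. exact: (raddf_sum (comp_poly z)). Qed.

Section PolynomialVectors.
Variables (m n : nat) (al : 'I_n -> 'I_m -> 'I_m -> R) (be : 'I_n -> 'I_m -> R).
Variable X0 : 'rV[R]_m.

Definition Bpoly (P P' : 'I_m -> {poly R}) : 'I_n -> {poly R} :=
  fun k => \sum_(i < m) \sum_(j < m) al k i j *: (P i * P' j).

Definition Apoly (P : 'I_m -> {poly R}) : 'I_n -> {poly R} :=
  fun k => \sum_(i < m) be k i *: P i.

Definition cpoly (X : 'rV[R]_m) : 'I_m -> {poly R} := fun i => (X ord0 i)%:P.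

(* The polynomial map [P |-> F(X0 + P) - F(X0)]. *)
Definition Qpoly (P : 'I_m -> {poly R}) : 'I_n -> {poly R} :=
  fun k => Bpoly (cpoly X0) P k + Bpoly P (cpoly X0) k + Apoly P k + Bpoly P P k.

Lemma pcoef_Bpoly (P P' : 'I_m -> {poly R}) (q : nat) :
  pcoef (Bpoly P P') q = \sum_(p < q.+1) Bmap al (pcoef P p) (pcoef P' (q - p)%N).
Proof.
apply/rowP => k; rewrite !mxE summxE coef_sum.
under eq_bigr => i _ do rewrite coef_sum.
under [RHS]eq_bigr => p _ do rewrite mxE.
rewrite [RHS]exchange_big; apply: eq_bigr => i _.
rewrite [RHS]exchange_big; apply: eq_bigr => j _.
rewrite coefZ coefM mulr_sumr; apply: eq_bigr => p _.
by rewrite !mxE mulrA.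
Qed.

Lemma pcoef_Apoly (P : 'I_m -> {poly R}) (q : nat) :
  pcoef (Apoly P) q = Amap be (pcoef P q).
Proof.
by apply/rowP => k; rewrite !mxE coef_sum; apply: eq_bigr => i _; rewrite coefZ mxE.
Qed.

Lemma pcoef_cpoly (X : 'rV[R]_m) (p : nat) :
  pcoef (cpoly X) p = if p == 0%N then X else 0.
Proof. by apply/rowP => i; rewrite !mxE coefC; case: (p == 0%N); rewrite ?mxE. Qed.

Lemma pcoef_Qpoly (P : 'I_m -> {poly R}) (q : nat) : pcoef P 0 = 0 ->
  pcoef (Qpoly P) q = Qcoef al be X0 (pcoef P) q.
Proof.
move=> P0; have -> : pcoef (Qpoly P) q = pcoef (Bpoly (cpoly X0) P) q
    + pcoef (Bpoly P (cpoly X0)) q + pcoef (Apoly P) q + pcoef (Bpoly P P) q.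
  by apply/rowP => k; rewrite !mxE !coefD.
rewrite !pcoef_Bpoly pcoef_Apoly big_Bmap_cauchy0 // /Qcoef /Cmap.
congr (_ + _ + _ + _).
  rewrite big_ord_recl pcoef_cpoly subn0 big1 ?addr0 // => i _.
  by rewrite pcoef_cpoly Bmap0l.
rewrite big_ord_recr /= subnn pcoef_cpoly big1 ?add0r // => i _.
by rewrite pcoef_cpoly subn_eq0 leqNgt ltn_ord Bmap0r.
Qed.

Lemma compv_Qpoly (P : 'I_m -> {poly R}) (z : {poly R}) :
  compv (Qpoly P) z = Qpoly (compv P z).
Proof.
apply: funext => k; rewrite /compv /Qpoly /Bpoly /Apoly !comp_polyD !comp_poly_sum.
have comp_B (U V : 'I_m -> {poly R}) :
    \sum_(i < m) ((\sum_(j < m) al k i j *: (U i * V j)) \Po z)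
    = \sum_(i < m) \sum_(j < m) al k i j *: ((U i \Po z) * (V j \Po z)).
  apply: eq_bigr => i _; rewrite comp_poly_sum; apply: eq_bigr => j _.
  by rewrite comp_polyZ comp_polyM.
rewrite !comp_B; congr (_ + _ + _ + _).
- by apply: eq_bigr => i _; apply: eq_bigr => j _; rewrite comp_polyC.
- by apply: eq_bigr => i _; apply: eq_bigr => j _; rewrite comp_polyC.
- by apply: eq_bigr => i _; rewrite comp_polyZ.
Qed.

End PolynomialVectors.

Lemma poly_drop_low (P : {poly R}) (N : nat) :
  (forall i, (i < N)%N -> P`_i = 0) -> drop_poly N P * 'X^N = P.
Proof.
move=> P_low; rewrite -[RHS](poly_take_drop N P).
suff -> : take_poly N P = 0 by rewrite add0r.
by apply/polyP => i; rewrite coef_take_poly coef0; case: ifP => // /P_low.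
Qed.

Lemma comp_poly_low (P z : {poly R}) (N k : nat) : (0 < k)%N ->
  (forall i, (i < N)%N -> P`_i = 0) -> (forall i, (i < k)%N -> z`_i = 0) ->
  (forall j, (j < N * k)%N -> (P \Po z)`_j = 0)
  /\ (P \Po z)`_(N * k) = P`_N * z`_k ^+ N.
Proof.
move=> k_gt0 P_low z_low.
have -> : P \Po z = ((drop_poly N P \Po z) * drop_poly k z ^+ N) * 'X^(N * k).
  rewrite -{1}(poly_drop_low P_low) comp_polyM comp_Xn_poly -mulrA.
  by congr (_ * _); rewrite -{1}(poly_drop_low z_low) exprMn -exprM mulnC.
split=> [j lt_j|]; first by rewrite coefMXn lt_j.
rewrite coefMXn ltnn subnn coef0M -!horner_coef0 horner_exp horner_comp.
have z0 : z.[0] = 0 by rewrite horner_coef0 z_low.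
by rewrite z0 !horner_coef0 !coef_drop_poly.
Qed.

Lemma pcoef_compv_low (l : nat) (P : 'I_l -> {poly R}) (z : {poly R})
    (N k : nat) : (0 < k)%N -> (forall i, (i < N)%N -> pcoef P i = 0) ->
  (forall i, (i < k)%N -> z`_i = 0) ->
  (forall j, (j < N * k)%N -> pcoef (compv P z) j = 0)
  /\ pcoef (compv P z) (N * k) = z`_k ^+ N *: pcoef P N.
Proof.
move=> k_gt0 P_low z_low.
have comp_low c : (forall j, (j < N * k)%N -> (P c \Po z)`_j = 0)
    /\ (P c \Po z)`_(N * k) = (P c)`_N * z`_k ^+ N.
  apply: comp_poly_low => // i /P_low /rowP /(_ c).
  by rewrite !mxE.
split=> [j lt_j|]; apply/rowP => c; rewrite !mxE /compv.
  by rewrite (comp_low c).1.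
by rewrite (comp_low c).2 mulrC.
Qed.

Definition ptrunc (l : nat) (Y : nat -> 'rV[R]_l) (N : nat) : 'I_l -> {poly R} :=
  fun i => \poly_(p < N) Y p ord0 i.

Lemma pcoef_ptrunc (l : nat) (Y : nat -> 'rV[R]_l) (N p : nat) :
  pcoef (ptrunc Y N) p = if (p < N)%N then Y p else 0.
Proof. by apply/rowP => i; rewrite !mxE coef_poly; case: ifP; rewrite ?mxE. Qed.

Lemma pcoef_compv_ptrunc (l : nat) (Y : nat -> 'rV[R]_l) (N : nat)
    (z : {poly R}) (j : nat) :
  pcoef (compv (ptrunc Y N) z) j = \sum_(p < N) (z ^+ p)`_j *: Y p.
Proof.
rewrite /compv /ptrunc; apply/rowP => i.
rewrite !mxE poly_def comp_poly_sum coef_sum summxE.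
by apply: eq_bigr => p _; rewrite comp_polyZ comp_Xn_poly coefZ !mxE mulrC.
Qed.

Lemma pcoef_compv0 (l : nat) (P : 'I_l -> {poly R}) (z : {poly R}) :
  z`_0 = 0 -> pcoef P 0 = 0 -> pcoef (compv P z) 0 = 0.
Proof.
move=> z0 /rowP P0; apply/rowP => i; have := P0 i; rewrite !mxE /compv => P0i.
by rewrite -horner_coef0 horner_comp horner_coef0 z0 horner_coef0.
Qed.

Section Reparametrization.
Variables (m n : nat) (al : 'I_n -> 'I_m -> 'I_m -> R) (be : 'I_n -> 'I_m -> R).
Variable X0 : 'rV[R]_m.
Local Notation Qcoef := (Qcoef al be X0).

Lemma Qcoef_reparam (Y : nat -> 'rV[R]_m) (N k : nat) (z : {poly R}) :
  (0 < k)%N -> Y 0%N = 0 -> (forall i, (i < k)%N -> z`_i = 0) ->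
  (forall q, (0 < q < N)%N -> Qcoef Y q = 0) ->
  let W := pcoef (compv (ptrunc Y N) z) in
  (forall j, (j < N * k)%N -> Qcoef W j = 0)
  /\ Qcoef W (N * k) = z`_k ^+ N *: Bconv al Y N.
Proof.
move=> k_gt0 Y0 z_low solY W.
have Yp0 : pcoef (ptrunc Y N) 0 = 0 by rewrite pcoef_ptrunc Y0; case: ifP.
have W0 : W 0%N = 0 by apply: pcoef_compv0; rewrite ?z_low.
have QW j : Qcoef W j = pcoef (compv (Qpoly al be X0 (ptrunc Y N)) z) j.
  by rewrite compv_Qpoly pcoef_Qpoly.
have QY_low i : (i < N)%N -> pcoef (Qpoly al be X0 (ptrunc Y N)) i = 0.
  rewrite pcoef_Qpoly //; case: i => [_|i lt_iN].
    by rewrite /Qcoef Yp0 linear0 add0r /Bconv big_geq.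
  rewrite -[RHS](solY i.+1) ?lt_iN //; apply: eq_Qcoef => // p /andP[_ le_pi].
  by rewrite pcoef_ptrunc (leq_ltn_trans le_pi lt_iN).
have QY_N : pcoef (Qpoly al be X0 (ptrunc Y N)) N = Bconv al Y N.
  rewrite pcoef_Qpoly // /Qcoef pcoef_ptrunc ltnn linear0 add0r.
  by apply: eq_Bconv => p /andP[_ lt_pN]; rewrite pcoef_ptrunc lt_pN.
have [W_low W_Nk] := pcoef_compv_low k_gt0 QY_low z_low.
by split=> [j lt_j|]; rewrite QW; [exact: W_low | rewrite W_Nk QY_N].
Qed.

End Reparametrization.

Lemma strong_rec_seq (A : Type) (x0 : A) (step : (nat -> A) -> nat -> A) :
  (forall f g q, (forall p, (p < q)%N -> f p = g p) -> step f q = step g q) ->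
  exists Y : nat -> A, forall q, Y q = step Y q.
Proof.
move=> step_local; pose g j := iter j step (fun=> x0).
have g_stable j p : (p < j)%N -> g j.+1 p = g j p.
  elim: j p => [//|j IHj] p lt_pj /=.
  by apply: step_local => r lt_rp; apply: IHj; apply: leq_trans lt_rp lt_pj.
have g_diag j p : (p < j)%N -> g j p = g p.+1 p.
  elim: j => [//|j IHj]; rewrite ltnS leq_eqVlt => /predU1P[-> //|lt_pj].
  by rewrite g_stable // IHj.
by exists (fun p => g p.+1 p) => q /=; apply: step_local => p /g_diag.
Qed.

Section Solvability.
Variables (m n : nat) (al : 'I_n -> 'I_m -> 'I_m -> R) (be : 'I_n -> 'I_m -> R).
Variables (X0 : 'rV[R]_m) (T : {vspace 'rV[R]_m}) (v : 'rV[R]_m).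
Local Notation C := (Cmap al be X0).
Local Notation Qcoef := (Qcoef al be X0).

Lemma Cmap_sub_Qcoef (Z W : nat -> 'rV[R]_m) (M : nat) :
  (forall p, (0 < p < M)%N -> Z p = W p) -> C (Z M - W M) = Qcoef Z M - Qcoef W M.
Proof.
by move=> /eq_Bconv eqZW; rewrite /Qcoef eqZW [C (W M) + _]addrC addrKA linearB.
Qed.

Hypothesis CT_inj : forall X, X \in T -> C X = 0 -> X = 0.

Lemma Qcoef_unique (Z W : nat -> 'rV[R]_m) (M : nat) :
  (forall j, (0 < j < M)%N -> Z j - W j \in T) ->
  (forall j, (0 < j < M)%N -> Qcoef Z j = Qcoef W j) ->
  forall j, (0 < j < M)%N -> Z j = W j.
Proof.
move=> ZW_T eqQ; elim/ltn_ind => j IHj /andP[j_gt0 lt_jM].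
apply/eqP; rewrite -subr_eq0; apply/eqP/CT_inj; first by rewrite ZW_T ?j_gt0.
rewrite Cmap_sub_Qcoef => [|p /andP[p_gt0 lt_pj]].
  by rewrite eqQ ?j_gt0 // subrr.
by apply: IHj; rewrite ?p_gt0 // (ltn_trans lt_pj).
Qed.

Hypothesis v_notin_T : v \notin T.
Hypothesis T_line : forall X, exists c, X - c *: v \in T.

(* The coordinate of [X] along [v] in the decomposition [T (+) <[v]>]. *)
Definition coord (X : 'rV[R]_m) : R := xchoose (T_line X).

Lemma coordP (X : 'rV[R]_m) : X - coord X *: v \in T.
Proof. exact: (xchooseP (T_line X)). Qed.

Lemma coord_line (c : R) : coord (c *: v) = c.
Proof.
have := coordP (c *: v); rewrite -scalerBl => cv_T.
apply/eqP; rewrite eq_sym -subr_eq0; apply: contraNT v_notin_T => nz.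
by rewrite -(scalerK nz v) memvZ.
Qed.

Hypothesis ker_line : forall X, C X = 0 -> exists c, X = c *: v.
Hypothesis Cv : C v = 0.

Variable Z : nat -> 'rV[R]_m.
Hypothesis Z0 : Z 0%N = 0.
Hypothesis Z_sol : forall q, (0 < q)%N -> Qcoef Z q = 0.

Section LeadingTerm.
Variable k : nat.
Hypotheses (k_gt0 : (0 < k)%N) (Z_low : forall p, (p < k)%N -> Z p = 0).
Hypothesis Zk_neq0 : Z k != 0.

Lemma coord_leading : coord (Z k) != 0.
Proof.
have CZk : C (Z k) = 0.
  rewrite -[RHS](Z_sol k_gt0) /Qcoef (@eq_Bconv _ _ _ _ (fun=> 0)).
    by rewrite /Bconv big1 ?addr0 // => p _; rewrite Bmap0l.
  by move=> p /andP[_ /Z_low].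
have [c Zk] := ker_line CZk.
by rewrite Zk coord_line; apply: contraNneq Zk_neq0 => c0; rewrite Zk c0 scale0r.
Qed.

Lemma Bconv_in_CT (Y : nat -> 'rV[R]_m) (N : nat) : (2 <= N)%N ->
  Y 0%N = 0 -> Y 1%N = v -> (forall p, (2 <= p)%N -> Y p \in T) ->
  (forall q, (0 < q < N)%N -> Qcoef Y q = 0) ->
  exists2 X, X \in T & C X = - Bconv al Y N.
Proof.
move=> N_ge2 Y0 Y1 Y_T Y_sol.
pose M := (N * k)%N; have k_le_M : (k <= M)%N by rewrite leq_pmull // ltnW.
pose zeta := \poly_(p < M.+1) coord (Z p).
have zeta_coef p : (p <= M)%N -> zeta`_p = coord (Z p).
  by move=> le_pM; rewrite coef_poly ltnS le_pM.
have zeta_low i : (i < k)%N -> zeta`_i = 0.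
  move=> lt_ik; rewrite zeta_coef; last by rewrite ltnW // (leq_trans lt_ik).
  by rewrite Z_low // -(scale0r v) coord_line.
have [W_sol W_M] := Qcoef_reparam k_gt0 Y0 zeta_low Y_sol.
set W := pcoef _ in W_sol W_M.
have ZW_T j : (j <= M)%N -> Z j - W j \in T.
  move=> le_jM; rewrite /W pcoef_compv_ptrunc -(subnK N_ge2) addn2.
  rewrite big_ord_recl big_ord_recl /= Y0 Y1 scaler0 add0r expr1 zeta_coef //.
  rewrite opprD addrA memvB ?coordP //.
  by apply: memv_suml => p _; rewrite memvZ // Y_T.
have Z_eq_W : forall j, (0 < j < M)%N -> Z j = W j.
  apply: Qcoef_unique => j /andP[j_gt0 lt_jM]; first exact/ZW_T/ltnW.
  by rewrite Z_sol // W_sol.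
have M_gt0 : (0 < M)%N by rewrite muln_gt0 k_gt0 (leq_trans _ N_ge2).
have := Cmap_sub_Qcoef Z_eq_W; rewrite Z_sol // W_M sub0r => CZW.
have zk_neq0 : zeta`_k ^+ N != 0.
  by rewrite expf_neq0 // zeta_coef // coord_leading.
exists ((zeta`_k ^+ N)^-1 *: (Z M - W M)); first by rewrite memvZ // ZW_T.
by rewrite linearZ /= CZW scalerN scalerA mulVf // scale1r.
Qed.

End LeadingTerm.

Lemma exists_standard_seq : (exists p, (0 < p)%N /\ Z p != 0) ->
  exists Y : nat -> 'rV[R]_m, [/\ Y 1%N = v,
    forall p, (2 <= p)%N -> Y p \in T & forall q, (0 < q)%N -> Qcoef Y q = 0].
Proof.
move=> Z_neq0; have : exists p, (0 < p)%N && (Z p != 0).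
  by have [p [p_gt0 Zp]] := Z_neq0; exists p; rewrite p_gt0.
case/ex_minnP => k /andP[k_gt0 Zk_neq0] k_min.
have Z_low p : (p < k)%N -> Z p = 0.
  case: (posnP p) => [-> _ //|p_gt0 lt_pk].
  by apply/eqP; apply: contraTT lt_pk => Zp; rewrite -leqNgt k_min ?p_gt0.
pose Cinv w := xget 0 [set X | X \in T /\ C X = w].
pose step f q := if q == 0%N then 0 else if q == 1%N then v
                 else Cinv (- Bconv al f q).
have [Y Y_step] : exists Y, forall q, Y q = step Y q.
  apply: (strong_rec_seq 0) => f g q eq_fg; rewrite /step.
  by rewrite (@eq_Bconv _ _ _ f g) // => p /andP[_ /eq_fg].
have Y0 : Y 0%N = 0 by rewrite Y_step.
have Y1 : Y 1%N = v by rewrite Y_step.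
have YS q : (2 <= q)%N -> Y q = Cinv (- Bconv al Y q).
  by rewrite Y_step /step; case: q => [|[|q]].
have Cinv_T w : Cinv w \in T.
  rewrite /Cinv; case: (xgetP 0 [set X | X \in T /\ C X = w]) => [X _ [] //|_].
  exact: mem0v.
have CinvK w X : X \in T -> C X = w -> C (Cinv w) = w.
  move=> X_T CX.
  by have [] := @xgetI _ 0 [set X | X \in T /\ C X = w] X (conj X_T CX).
have Y_T p : (2 <= p)%N -> Y p \in T by move/YS ->.
exists Y; split=> //; elim/ltn_ind => q IHq q_gt0.
case: (ltngtP q 1) => [|q_gt1|->]; first by rewrite ltnNge q_gt0.
  have [|X X_T CX] := Bconv_in_CT k_gt0 Z_low Zk_neq0 q_gt1 Y0 Y1 Y_T.
    by move=> p /andP[p_gt0 lt_pq]; apply: IHq.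
  by rewrite /Qcoef YS // (CinvK _ X) // addNr.
by rewrite /Qcoef Y1 Cv add0r /Bconv big_geq.
Qed.

End Solvability.

Lemma line_complement (m : nat) (T : {vspace 'rV[R]_m}) (v : 'rV[R]_m) :
  (0 < m)%N -> \dim T = (m - 1)%N -> v \notin T ->
  forall X, exists c, X - c *: v \in T.
Proof.
move=> m_gt0 dimT v_notin_T X.
have v_neq0 : v != 0 by apply: contraNneq v_notin_T => ->; rewrite mem0v.
have T_v_full : (T + <[v]>)%VS = fullv.
  apply/eqP; rewrite eqEdim subvf dimvf /dim /= mul1n.
  rewrite dimv_disjoint_sum ?dimT ?dim_vline ?v_neq0 ?subnK //.
  apply/eqP; rewrite -subv0; apply/subvP => x /memv_capP[x_T /vlineP[c x_cv]].
  rewrite memv0 x_cv; case: (eqVneq c 0) => [->|c_neq0]; first by rewrite scale0r.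
  have := memvZ c^-1 x_T.
  by rewrite x_cv scalerA mulVf // scale1r (negbTE v_notin_T).
have : X \in (T + <[v]>)%VS by rewrite T_v_full memvf.
by case/memv_addP => y y_T [_ /vlineP[c ->] ->]; exists c; rewrite addrK.
Qed.

Theorem theorem6 (m n : nat) (hm : (1 <= m)%N) (hn : (1 <= n)%N)
  (alpha : 'I_n -> 'I_m -> 'I_m -> R) (beta : 'I_n -> 'I_m -> R)
  (gamma : 'I_n -> R)
  (halpha : forall k i j, alpha k i j = alpha k j i)
  (X0 : 'rV[R]_m) (hX0 : Fmap alpha beta gamma X0 = 0)
  (hker : dim_ker_one (Cmap alpha beta X0))
  (T : {vspace 'rV[R]_m}) (hT : \dim T = (m - 1)%N)
  (hTker : forall X : 'rV[R]_m, X \in T -> Cmap alpha beta X0 X = 0 -> X = 0)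
  (Xs : nat -> 'rV[R]_m)
  (hXs : analytic_family alpha beta gamma X0 Xs) (hnc : nonconstant Xs) :
  exists Ys : nat -> 'rV[R]_m,
    Ys 0%N = X0 /\ T_standard alpha beta X0 T Ys.
Proof.
(* [hn] and [hX0] (the family at [t = 0]) are unused, and so is [halpha]:
   [F(X0 + Y) = F(X0) + C Y + B(Y, Y)] holds for any [alpha]. *)
have [v [v_neq0 ker_v]] := hker.
have Cv : Cmap alpha beta X0 v = 0 by apply/ker_v; exists 1; rewrite scale1r.
have v_notin_T : v \notin T.
  by apply: contra v_neq0 => v_T; apply/eqP; apply: hTker.
pose Z p := if p == 0%N then 0 else Xs p.
have Z_sol q : (0 < q)%N -> Qcoef alpha beta X0 Z q = 0.
  move=> q_gt0; rewrite -(Qcoef_analytic_family hXs q_gt0).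
  by apply: eq_Qcoef => // p /andP[p_gt0 _]; rewrite /Z gtn_eqF.
have Z_neq0 : exists p, (0 < p)%N /\ Z p != 0.
  by have [p [p_gt0 Xp]] := hnc; exists p; rewrite /Z gtn_eqF.
have [Y [Y1 Y_T Y_sol]] := exists_standard_seq hTker v_notin_T
  (line_complement hm hT v_notin_T) (fun X => (ker_v X).1) Cv
  (erefl : Z 0%N = 0) Z_sol Z_neq0.
exists (fun p => if p == 0%N then X0 else Y p).
split=> //; split=> [q q_gt0|]; last split=> [|p p_ge2].
- apply/eqP; rewrite -addr_eq0; apply/eqP.
  rewrite -[LHS]/(Qcoef alpha beta X0 (fun p => if p == 0%N then X0 else Y p) q).
  rewrite -(Y_sol q q_gt0); apply: eq_Qcoef => // p /andP[p_gt0 _].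
  by rewrite gtn_eqF.
- by rewrite /= Y1.
- by rewrite gtn_eqF ?(leq_trans _ p_ge2) // Y_T.
Qed.
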